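(* For every positive integer $t$ there exists a constant $C=C(t)$ with the following property. Let $G$ be a bipartite graph containing no copy of $\theta_{3,t}[2]$, let $z_1,z_2$ be distinct vertices of $G$, and let $\ell=|N(z_1,z_2)|$. Let $R=\{v\in V(G)\setminus\{z_1,z_2\}: d(v,z_1,z_2)\ge C\ell^{1/2}\}$. Then the number of triples $(z',w_1,w_2)$ of distinct vertices with $z'\in R$ and $w_1,w_2\in N(z',z_1,z_2)$ is at most $C\ell^2$.
   Context: For vertices $v_1,\dots,v_k$ of a graph, $N(v_1,\dots,v_k)$ denotes their common neighbourhood and $d(v_1,\dots,v_k)=|N(v_1,\dots,v_k)|$. The theta graph $\theta_{3,t}$ is the union of $t$ paths of length $3$ sharing the same two endpoints and pairwise internally vertex-disjoint; $F[2]$ is obtained from a graph $F$ by replacing each vertex by an independent set of size $2$ and each edge by a copy of $K_{2,2}$ between the corresponding sets. *)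

From mathcomp Require Import all_boot all_order.
Set Implicit Arguments. Unset Strict Implicit. Unset Printing Implicit Defensive.

Definition simple_graph (T : finType) (e : rel T) : Prop :=
  symmetric e /\ irreflexive e.

Definition bipartite (T : finType) (e : rel T) : Prop :=
  exists c : T -> bool, forall x y, e x y -> c x != c y.

Definition has_copy (V : Type) (h : rel V) (T : finType) (e : rel T) : Prop :=
  exists f : V -> T, injective f /\ forall x y, h x y -> e (f x) (f y).

(* F[2]: each vertex replaced by an independent pair, each edge by K_{2,2}. *)
Definition blowup2 (V : Type) (h : rel V) : rel (V * bool) :=
  fun p q => h p.1 q.1.

(* theta_{3,t}: endpoints inl false (=a), inl true (=b); internal vertices
   inr (i,false) (=x_i, adjacent to a) and inr (i,true) (=y_i, adjacent to b);
   paths a - x_i - y_i - b for i < t. *)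
Definition theta_vert (t : nat) : Type := (bool + ('I_t * bool))%type.

Definition theta3_adj (t : nat) : rel (theta_vert t) :=
  fun u v =>
    match u, v with
    | inl b, inr (_, c) => b == c
    | inr (_, c), inl b => b == c
    | inr (i, c), inr (j, d) => (i == j) && (c != d)
    | inl _, inl _ => false
    end.

Definition theta3_2 (t : nat) : rel (theta_vert t * bool) :=
  blowup2 (@theta3_adj t).

Definition cnbr2 (T : finType) (e : rel T) (a b : T) : {set T} :=
  [set w | e a w && e b w].
Definition cnbr3 (T : finType) (e : rel T) (a b c : T) : {set T} :=
  [set w | [&& e a w, e b w & e c w]].

From mathcomp Require Import all_boot all_order.
From mathcomp Require Import zify.
Set Implicit Arguments. Unset Strict Implicit. Unset Printing Implicit Defensive.

(* Let a centre z "see" a point x when z \in R and x \in N(z, z1, z2); the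
   triples to count are the cherries x - z - y (x != y) of this incidence
   relation, and every point lies in L = N(z1, z2), of size l.  Cauchy-Schwarz
   twice gives (#cherries)^2 <= l^2 (#cherries + #C4), where the C4 are the
   4-cycles x z y w.  Fix x != y.  If more than 4t codeg(x, y) of the C4 through
   x, y have centres z, w with at least 2t+2 common points, a greedy choice
   yields t disjoint K_{2,2}'s between centres seeing x, y and points other than
   x, y; with {z1, z2} and {x, y} as the end pairs they form theta_{3,t}[2].
   The remaining C4 have centres with few common points, so there are at most
   (2t+1) sum_x deg(x)^2 of them; as every centre sees at least C sqrt(l) points,
   this is at most a small fraction of sum_x cherries(x)^2, and the resulting
   inequality solves to #cherries <= C l^2. *)

Lemma cards_sum_mem (T : finType) (A : {set T}) : #|A| = \sum_x (x \in A : nat).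
Proof. by rewrite -sum1_card big_mkcond; apply: eq_bigr => x _; case: (x \in A). Qed.

Lemma sqr_sum (I : Type) (r : seq I) (P : pred I) (f : I -> nat) :
  (\sum_(i <- r | P i) f i) ^ 2 = \sum_(i <- r | P i) \sum_(j <- r | P j) f i * f j.
Proof. by rewrite expnS expn1 big_distrlr. Qed.

Lemma sqr_sum_leq_card_sum_sqr (T : finType) (A : {set T}) (f : T -> nat) :
  (forall i, i \notin A -> f i = 0) ->
  (\sum_i f i) ^ 2 <= #|A| * \sum_i f i ^ 2.
Proof.
move=> f_supp.
have sum_in_A (g : T -> nat) : (forall i, i \notin A -> g i = 0) ->
    \sum_i g i = \sum_(i in A) g i.
  move=> g_supp; rewrite [RHS]big_mkcond; apply: eq_bigr => i _.
  by case: ifP => // /negbT /g_supp.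
rewrite (sum_in_A f f_supp) (sum_in_A (fun i => f i ^ 2)); last by move=> i /f_supp ->.
set X := \sum_(i in A) f i ^ 2.
rewrite sqr_sum -(leq_pmul2l (isT : 0 < 2)).
have -> : 2 * (#|A| * X) = \sum_(i in A) \sum_(j in A) (f i ^ 2 + f j ^ 2).
  under [RHS]eq_bigr do rewrite big_split /= sum_nat_const.
  by rewrite big_split /= sum_nat_const -big_distrr -/X mul2n -addnn.
rewrite big_distrr; apply: leq_sum => i _; rewrite big_distrr; apply: leq_sum => j _.
by have [AMGM _] := nat_Cauchy (f i) (f j).
Qed.

Lemma exchange_big22 (T : finType) (F : T -> T -> T -> T -> nat) :
  \sum_x \sum_y \sum_z \sum_w F x y z w = \sum_z \sum_w \sum_x \sum_y F x y z w.
Proof.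
under eq_bigr do rewrite exchange_big.
under eq_bigr do under eq_bigr do rewrite exchange_big.
by rewrite exchange_big; apply: eq_bigr => z _; rewrite exchange_big.
Qed.

(* Read [n] as #cherries, [s] as sum_x cherries(x)^2, [q] as #C4 and [d] as
   sum_x deg(x)^2; [8 M <= C ^ 2] makes the low-overlap term [M d] cost at
   most half of [s]. *)
Lemma cherry_count_arith (n s q d l C k M : nat) :
  n ^ 2 <= l * s -> s <= l * (n + q) -> q <= k * n + M * d ->
  C ^ 2 * l * d <= 4 * s -> 8 * M <= C ^ 2 -> 2 * (k + 1) <= C ->
  n <= C * l ^ 2.
Proof.
move=> n_s s_q q_d d_s M_C k_C.
have C_gt0 : 0 < C ^ 2 by rewrite expn_gt0; lia.
have low_overlap : 2 * (M * (l * d)) <= s.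
  rewrite -(leq_pmul2l C_gt0).
  have : 2 * M * (C ^ 2 * l * d) <= 2 * M * (4 * s) by rewrite leq_mul2l d_s orbT.
  have : 8 * M * s <= C ^ 2 * s by rewrite leq_mul2r M_C orbT.
  nia.
have s_n : s <= 2 * (k + 1) * (l * n).
  have : l * q <= l * (k * n + M * d) by rewrite leq_mul2l q_d orbT.
  nia.
have [->//|n_gt0] := posnP n; rewrite -(leq_pmul2l n_gt0).
have : 2 * (k + 1) * (l * l * n) <= C * (l * l * n) by rewrite leq_mul2r k_C orbT.
have : l * s <= l * (2 * (k + 1) * (l * n)) by rewrite leq_mul2l s_n orbT.
nia.
Qed.

Section Cherries.

Variables (T : finType) (inc : rel T).

Definition nbhd z := [set x | inc z x].
Definition common x y := [set z | inc z x && inc z y].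
Definition deg x := \sum_z inc z x.
Definition codeg x y := \sum_z inc z x * inc z y.
Definition overlap z w := \sum_x inc z x * inc w x.
Definition cherries x := \sum_y (x != y) * codeg x y.
Definition ncherries := \sum_x cherries x.
Definition c4 x y z w : nat := [&& inc z x, inc z y, inc w x & inc w y].
Definition nc4 :=
  \sum_x \sum_y (x != y) * \sum_z \sum_w (z != w) * c4 x y z w.
Definition rich_c4 m x y :=
  \sum_z \sum_w (z != w) * (m <= overlap z w) * c4 x y z w.

Lemma codeg_card x y : codeg x y = #|common x y|.
Proof.
by rewrite cards_sum_mem; apply: eq_bigr => z _; rewrite inE; case: inc; case: inc.
Qed.

Lemma overlap_card z w : overlap z w = #|nbhd z :&: nbhd w|.
Proof.
by rewrite cards_sum_mem; apply: eq_bigr => x _; rewrite !inE; case: inc; case: inc.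
Qed.

Lemma sum_sqr_codeg :
  \sum_x \sum_y ((x != y) * codeg x y) ^ 2 = ncherries + nc4.
Proof.
rewrite /ncherries /cherries -big_split; apply: eq_bigr => x _.
rewrite -big_split; apply: eq_bigr => y _.
case: (x != y); rewrite ?mul0n // !mul1n.
rewrite /codeg sqr_sum -big_split; apply: eq_bigr => z _.
rewrite (bigD1 z) //=; congr (_ + _); first by case: inc; case: inc.
rewrite big_mkcond; apply: eq_bigr => w _; rewrite eq_sym /c4.
by case: (z != w); rewrite ?mul0n ?mul1n //; do 4 case: inc.
Qed.

Lemma sum_c4 z w : \sum_x \sum_y c4 x y z w = overlap z w ^ 2.
Proof.
rewrite /overlap sqr_sum; apply: eq_bigr => x _; apply: eq_bigr => y _.
by rewrite /c4; do 4 case: inc.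
Qed.

Lemma sum_overlap : \sum_z \sum_w overlap z w = \sum_x deg x ^ 2.
Proof.
rewrite /overlap; under eq_bigr do rewrite exchange_big.
by rewrite exchange_big; apply: eq_bigr => x _; rewrite /deg sqr_sum.
Qed.

Lemma nc4_leq (m k : nat) :
  (forall x y, x != y -> rich_c4 m x y <= k * codeg x y) ->
  nc4 <= k * ncherries + (m - 1) * \sum_x deg x ^ 2.
Proof.
move=> rich_bound.
pose poor x y := \sum_z \sum_w (overlap z w < m) * c4 x y z w.
have nc4_split : nc4 <= \sum_x \sum_y ((x != y) * rich_c4 m x y + poor x y).
  apply: leq_sum => x _; apply: leq_sum => y _.
  case: (x != y); rewrite ?mul0n ?mul1n //.
  rewrite -big_split; apply: leq_sum => z _; rewrite -big_split; apply: leq_sum => w _.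
  by rewrite /=; case: (z != w); case: leqP; rewrite ?mul0n ?mul1n ?add0n ?addn0.
apply: (leq_trans nc4_split); under eq_bigr do rewrite big_split /=.
rewrite big_split /=; apply: leq_add.
  rewrite big_distrr; apply: leq_sum => x _; rewrite big_distrr; apply: leq_sum => y _.
  have [_|xy] := eqVneq x y; first by rewrite mul0n.
  by rewrite /= !mul1n; apply: rich_bound.
(* centres z, w with overlap o < m lie on o ^ 2 <= (m - 1) o 4-cycles *)
rewrite exchange_big22 -sum_overlap big_distrr; apply: leq_sum => z _.
rewrite big_distrr; apply: leq_sum => w _.
under eq_bigr do rewrite -big_distrr /=.
rewrite -big_distrr /= sum_c4; case: ltnP => //= ov_m.
by rewrite mul1n; apply: leq_mul; lia.
Qed.

Lemma cherries_by_centre x : cherries x = \sum_z inc z x * (#|nbhd z| - 1).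
Proof.
rewrite /cherries /codeg; under eq_bigr do rewrite big_distrr /=.
rewrite exchange_big; apply: eq_bigr => z _.
have [zx|_] := boolP (inc z x); last by rewrite big1 // => y _; rewrite muln0.
rewrite mul1n cards_sum_mem (bigD1 x) // [in RHS](bigD1 x) //=.
rewrite inE zx eqxx mul0n add0n add1n subSS subn0; apply: eq_bigr => y yx.
by rewrite inE eq_sym yx !mul1n.
Qed.

Lemma deg_sqr_leq_cherries (K : nat) x :
  (forall z y, inc z y -> 1 < #|nbhd z|) ->
  (forall z y, inc z y -> K <= #|nbhd z| ^ 2) ->
  K * deg x ^ 2 <= 4 * cherries x ^ 2.
Proof.
move=> nbhd_gt1 nbhd_big.
have weighted_deg : K * deg x ^ 2 <= (\sum_z inc z x * #|nbhd z|) ^ 2.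
  rewrite /deg !sqr_sum big_distrr; apply: leq_sum => z _.
  rewrite big_distrr; apply: leq_sum => w _.
  have [zx|_] := boolP (inc z x); last by rewrite /= ?mul0n ?muln0.
  have [wx|_] := boolP (inc w x); last by rewrite /= ?mul0n ?muln0.
  rewrite /= !mul1n muln1 -leq_sqr.
  by have := nbhd_big z x zx; have := nbhd_big w x wx; nia.
have : \sum_z inc z x * #|nbhd z| <= 2 * cherries x.
  rewrite cherries_by_centre big_distrr; apply: leq_sum => z _.
  have [zx|_] := boolP (inc z x); last by rewrite /= ?mul0n ?muln0.
  by have := nbhd_gt1 z x zx; rewrite /= !mul1n; lia.
rewrite -[4]/(2 ^ 2) -expnMn -leq_sqr; exact: leq_trans weighted_deg.
Qed.

Lemma ncherries_leq (L : {set T}) (C m k : nat) :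
  (forall z x, inc z x -> x \in L) ->
  (forall z x, inc z x -> C ^ 2 * #|L| <= #|nbhd z| ^ 2) ->
  8 * (m - 1) <= C ^ 2 -> 2 * (k + 1) <= C ->
  (forall x y, x != y -> rich_c4 m x y <= k * codeg x y) ->
  ncherries <= C * #|L| ^ 2.
Proof.
move=> inc_L nbhd_big m_C k_C rich_bound.
have inc_out z x : x \notin L -> inc z x = false.
  by move=> xL; apply: contraNF xL; apply: inc_L.
have codeg_out x y : (x \notin L) || (y \notin L) -> codeg x y = 0.
  by case/orP=> /inc_out xyL; apply: big1 => z _; rewrite xyL ?muln0.
have ncherries_sqr : ncherries ^ 2 <= #|L| * \sum_x cherries x ^ 2.
  apply: sqr_sum_leq_card_sum_sqr => x xL; apply: big1 => y _.
  by rewrite codeg_out ?xL ?muln0.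
have cherries_sqr : \sum_x cherries x ^ 2 <= #|L| * (ncherries + nc4).
  rewrite -sum_sqr_codeg big_distrr; apply: leq_sum => x _.
  apply: sqr_sum_leq_card_sum_sqr => y yL.
  by rewrite codeg_out ?yL ?orbT ?muln0.
have deg_sqr : C ^ 2 * #|L| * \sum_x deg x ^ 2 <= 4 * \sum_x cherries x ^ 2.
  rewrite !big_distrr; apply: leq_sum => x _.
  apply: deg_sqr_leq_cherries => // z y zy.
  have C_gt1 : 1 < C ^ 2 * #|L|.
    have : 0 < #|L| by apply/card_gt0P; exists y; apply: inc_L zy.
    by rewrite expnS expn1; nia.
  by rewrite -(ltn_exp2r _ _ (isT : 0 < 2)); apply: leq_trans (nbhd_big z y zy).
exact: cherry_count_arith ncherries_sqr cherries_sqr (nc4_leq rich_bound) deg_sqr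
                          m_C k_C.
Qed.

End Cherries.

Definition extend_pair (T : Type) (f : nat * bool -> T) (j : nat) (a b : T) p :=
  if p.1 == j then (if p.2 then b else a) else f p.

Lemma extend_pair_inj (T : eqType) (f : nat * bool -> T) j (a b : T) :
  a != b -> {in [pred p | p.1 < j] &, injective f} ->
  (forall p, p.1 < j -> (f p != a) && (f p != b)) ->
  {in [pred p | p.1 < j.+1] &, injective (extend_pair f j a b)}.
Proof.
move=> ab f_inj f_new [i c] [i' c'].
rewrite !inE /extend_pair /= !ltnS [i <= j]leq_eqVlt [i' <= j]leq_eqVlt.
have [->|_] := eqVneq i j; have [->|_] := eqVneq i' j => //= i_lt i'_lt.
- by case: c c' => [] [] // ba; move: ab; rewrite ba eqxx.
- have /andP[] := f_new (i', c') i'_lt.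
  by case: c => [_ /eqP fb|/eqP fa _] E; [move: fb | move: fa]; rewrite E.
- have /andP[] := f_new (i, c) i_lt.
  by case: c' => [_ /eqP fb|/eqP fa _] E; [move: fb | move: fa]; rewrite E.
- exact: f_inj.
Qed.

Lemma two_outside_image (T : finType) (A : {set T}) (f : nat * bool -> T) j :
  2 * j + 1 < #|A| ->
  exists a b, [/\ a != b, a \in A, b \in A &
                 forall p, p.1 < j -> (f p != a) && (f p != b)].
Proof.
move=> A_big; set Img := [set f (val p.1, p.2) | p : 'I_j * bool].
have Img_small : #|Img| <= 2 * j.
  apply: (leq_trans (leq_imset_card _ _)).
  by rewrite card_prod card_ord card_bool mulnC.
have : 1 < #|A :\: Img|.
  by rewrite cardsD; have := subset_leq_card (subsetIr A Img); lia.
move=> /card_gt1P[a [b [aA bA ab]]]; exists a, b.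
move: aA bA; rewrite !inE => /andP[aImg aA] /andP[bImg bA]; split=> // [[i c]] /= i_lt.
have fImg : f (i, c) \in Img by apply/imsetP; exists (Ordinal i_lt, c).
by apply/andP; split; [move: aImg | move: bImg]; apply: contraNneq => <-.
Qed.

Section Packing.

Variables (T : finType) (inc : rel T).

Definition rich_pairs m (F : {set T}) :=
  \sum_z \sum_w (z \in F) * (w \in F) * ((z != w) && (m <= overlap inc z w)).

Lemma rich_c4_rich_pairs m x y :
  rich_c4 inc m x y = rich_pairs m (common inc x y).
Proof.
apply: eq_bigr => z _; apply: eq_bigr => w _; rewrite /c4 !inE.
by case: (z != w); case: (m <= _); do 4 case: inc.
Qed.

Lemma rich_pairs_setD2 m (F : {set T}) z w :
  rich_pairs m F <= rich_pairs m (F :\: [set z; w]) + 4 * #|F|.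
Proof.
set P := [set z; w].
have P_F : \sum_u \sum_v ((u \in P) * (v \in F) + (u \in F) * (v \in P)) <= 4 * #|F|.
  have sum_prod (A B : {set T}) : \sum_u \sum_v (u \in A) * (v \in B) = #|A| * #|B|.
    rewrite cards_sum_mem big_distrl; apply: eq_bigr => u _.
    by rewrite cards_sum_mem big_distrr.
  under eq_bigr do rewrite big_split /=.
  by rewrite big_split /= !sum_prod cards2; case: (z != w) => /=; lia.
apply: leq_trans (leq_add (leqnn _) P_F); rewrite -big_split; apply: leq_sum => u _.
rewrite -big_split; apply: leq_sum => v _; rewrite !in_setD.
by case: (u \in F); case: (v \in F); case: (u \in P); case: (v \in P); case: (_ && _).
Qed.

Variables x y : T.

(* [g (i, _)] and [h (i, _)] are the centre and point pairs of the i-th K_{2,2};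
   only the indices i < j matter. *)
Definition k22_packing (F : {set T}) j (g h : nat * bool -> T) : Prop :=
  [/\ forall p, p.1 < j -> g p \in F,
      forall i c d, i < j -> inc (g (i, d)) (h (i, c)),
      forall p, p.1 < j -> (h p != x) && (h p != y),
      {in [pred p | p.1 < j] &, injective g} &
      {in [pred p | p.1 < j] &, injective h}].

Lemma k22_packing_extend (F : {set T}) j (g h : nat * bool -> T) z w :
  z \in F -> w \in F -> z != w -> 2 * j + 4 <= overlap inc z w ->
  k22_packing (F :\: [set z; w]) j g h ->
  exists g' h', k22_packing F j.+1 g' h'.
Proof.
move=> zF wF zw overlap_big [g_F gh_inc h_xy g_inj h_inj].
set fresh := (nbhd inc z :&: nbhd inc w) :\: [set x; y].
have [a [b [ab]]] : exists a b, [/\ a != b, a \in fresh, b \in fresh &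
    forall p, p.1 < j -> (h p != a) && (h p != b)].
  apply: two_outside_image; rewrite cardsD -overlap_card.
  have := subset_leq_card (subsetIr (nbhd inc z :&: nbhd inc w) [set x; y]).
  by rewrite cards2; case: (x != y) => /=; lia.
rewrite !inE !negb_or => /andP[/andP[ax ay] /andP[za wa]].
move=> /andP[/andP[bx b_y] /andP[zb wb]] h_ab.
exists (extend_pair g j z w), (extend_pair h j a b).
have g_zw p : p.1 < j -> (g p != z) && (g p != w).
  by move=> /g_F; rewrite !inE negb_or => /andP[-> _].
split; rewrite /extend_pair.
- move=> [i c] /=; rewrite ltnS leq_eqVlt => /orP[/eqP->|i_lt].
    by rewrite eqxx; case: c.
  by rewrite ltn_eqF //; have := g_F (i, c) i_lt; rewrite inE => /andP[].
- move=> i c d; rewrite /= ltnS leq_eqVlt => /orP[/eqP->|i_lt].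
    by rewrite eqxx; case: c; case: d.
  by rewrite ltn_eqF //; apply: gh_inc.
- move=> [i c] /=; rewrite ltnS leq_eqVlt => /orP[/eqP->|i_lt].
    by rewrite eqxx; case: c; apply/andP.
  by rewrite ltn_eqF //; apply: h_xy.
- exact: extend_pair_inj.
- exact: extend_pair_inj.
Qed.

Lemma k22_packing_of_rich_pairs m j (F : {set T}) :
  2 * j + 2 <= m -> 4 * j * #|F| < rich_pairs m F ->
  exists g h, k22_packing F j g h.
Proof.
elim: j F => [|j IH] F m_big rich_many.
  by exists (fun _ => x), (fun _ => x); split=> // p q; rewrite inE.
have : rich_pairs m F != 0 by rewrite -lt0n; apply: leq_ltn_trans rich_many.
rewrite sum_nat_eq0 negb_forall => /existsP[z]; rewrite /= sum_nat_eq0 negb_forall.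
case/existsP=> w /=; case zF: (z \in F); case wF: (w \in F) => //=.
case: (boolP (z != w)) => //= zw; case: leqP => //= overlap_big _.
have rich_many' : 4 * j * #|F :\: [set z; w]| < rich_pairs m (F :\: [set z; w]).
  have := rich_pairs_setD2 m F z w.
  have : #|F :\: [set z; w]| <= #|F| by apply/subset_leq_card/subsetDl.
  by move: rich_many; rewrite mulnS mulnDl; nia.
have [|g [h packing]] := IH _ _ rich_many'; first by lia.
by apply: k22_packing_extend packing => //; lia.
Qed.

End Packing.

Definition centre_rel (T : finType) (e : rel T) (z1 z2 : T) (R : {set T}) : rel T :=
  fun z v => (z \in R) && (v \in cnbr3 e z z1 z2).

Section ThetaEmbedding.

Variables (T : finType) (e : rel T) (t : nat).
Variables (z1 z2 x y : T) (g h : nat * bool -> T).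

Definition theta_embedding (p : theta_vert t * bool) : T :=
  match p.1 with
  | inl false => if p.2 then z2 else z1
  | inl true => if p.2 then y else x
  | inr (i, false) => h (val i, p.2)
  | inr (i, true) => g (val i, p.2)
  end.

Hypothesis e_sym : symmetric e.
Hypotheses (z1x : e z1 x) (z2x : e z2 x) (z1y : e z1 y).
Hypothesis gh_e : forall i c d, i < t -> e (g (i, d)) (h (i, c)).
Hypothesis zh_e : forall i c, i < t -> e z1 (h (i, c)) && e z2 (h (i, c)).
Hypothesis gxy_e : forall i c, i < t -> e (g (i, c)) x && e (g (i, c)) y.

Lemma theta_embedding_edges p q :
  theta3_2 p q -> e (theta_embedding p) (theta_embedding q).
Proof.
case: p q => [[[]|[i []]] c] [[[]|[i' []]] c']; rewrite /theta3_2 /blowup2 /=;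
  rewrite /theta_embedding /= ?andbT ?andbF //.
- move=> _; have /andP[] := @gxy_e i' c' (ltn_ord i').
  by rewrite !(e_sym _ (g _)); case: c.
- by move=> _; have /andP[] := @zh_e i' c' (ltn_ord i'); case: c.
- by move=> _; have /andP[] := @gxy_e i c (ltn_ord i); case: c'.
- by move=> /eqP->; apply/gh_e/ltn_ord.
- move=> _; have /andP[] := @zh_e i c (ltn_ord i).
  by rewrite !(e_sym _ (h _)); case: c'.
- by move=> /eqP->; rewrite e_sym; apply/gh_e/ltn_ord.
Qed.

Variable col : T -> bool.
Hypothesis col_e : forall u v, e u v -> col u != col v.
Hypotheses (z12 : z1 != z2) (xy : x != y).
Hypothesis g_z : forall p, p.1 < t -> (g p != z1) && (g p != z2).
Hypothesis h_xy : forall p, p.1 < t -> (h p != x) && (h p != y).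
Hypotheses (g_inj : {in [pred p | p.1 < t] &, injective g})
           (h_inj : {in [pred p | p.1 < t] &, injective h}).

(* Bipartiteness puts z1, z2 and the g (i, _) on one side and x, y and the
   h (i, _) on the other; this is what separates g (i, _) from h (i', _). *)
Definition theta_side (u : theta_vert t) : bool :=
  match u with inl b => b | inr (_, c) => ~~ c end.

Lemma col_theta_embedding p : col (theta_embedding p) = col z1 (+) theta_side p.1.
Proof.
have col_adj u v : e u v -> col v = ~~ col u.
  by move/col_e; case: (col u); case: (col v).
case: p => [[[]|[i []]] c]; rewrite /theta_embedding /= ?addbT ?addbF.
- by case: c; apply: col_adj.
- case: c => //; move: (col_e z1x) (col_e z2x).
  by case: (col z1); case: (col z2); case: (col x).
- have /andP[gx _] := @gxy_e i c (ltn_ord i).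
  by move: (col_e z1x) (col_e gx); case: (col z1); case: (col x); case: (col (g _)).
- by have /andP[zh _] := @zh_e i c (ltn_ord i); apply: col_adj.
Qed.

Lemma theta_embedding_inj : injective theta_embedding.
Proof.
move=> p q E; have := congr1 col E; rewrite !col_theta_embedding => /addbI.
case: p q E => [[[]|[i []]] c] [[[]|[i' []]] c']; rewrite /theta_embedding //=.
- by case: c c' => [] [] // E; move: xy; rewrite E eqxx.
- have /andP[hx hy] := @h_xy (val i', c') (ltn_ord i').
  by case: c => E; [move: hy | move: hx]; rewrite -E eqxx.
- by case: c c' => [] [] // E; move: z12; rewrite E eqxx.
- have /andP[gz1 gz2] := @g_z (val i', c') (ltn_ord i').
  by case: c => E; [move: gz2 | move: gz1]; rewrite -E eqxx.
- have /andP[gz1 gz2] := @g_z (val i, c) (ltn_ord i).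
  by case: c' => E; [move: gz2 | move: gz1]; rewrite E eqxx.
- move=> E _; have [] : (val i, c) = (val i', c').
    by apply: g_inj E; rewrite inE /= ltn_ord.
  by move=> /val_inj -> ->.
- have /andP[hx hy] := @h_xy (val i, c) (ltn_ord i).
  by case: c' => E; [move: hy | move: hx]; rewrite E eqxx.
- move=> E _; have [] : (val i, c) = (val i', c').
    by apply: h_inj E; rewrite inE /= ltn_ord.
  by move=> /val_inj -> ->.
Qed.

End ThetaEmbedding.

Lemma theta_copy_of_k22_packing (T : finType) (e : rel T) (t : nat) (R : {set T})
    (z1 z2 x y : T) (g h : nat * bool -> T) :
  symmetric e -> bipartite e -> 0 < t -> z1 != z2 -> x != y ->
  (forall v, v \in R -> (v != z1) && (v != z2)) ->
  k22_packing (centre_rel e z1 z2 R) x y (common (centre_rel e z1 z2 R) x y) t g h ->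
  has_copy (@theta3_2 t) e.
Proof.
move=> e_sym [col col_e] t_gt0 z12 xy R_z [g_F gh_inc h_xy g_inj h_inj].
have g_common i c : i < t -> [&& g (i, c) \in R, e (g (i, c)) x & e (g (i, c)) y].
  move=> /(@g_F (i, c)); rewrite !inE /centre_rel !inE.
  by case/andP=> /andP[-> /and3P[-> _ _]] /andP[_ /and3P[-> _ _]].
have := @g_F (0, false) t_gt0; rewrite !inE /centre_rel !inE.
case/andP=> /andP[_ /and3P[_ z1x z2x]] /andP[_ /and3P[_ z1y _]].
have gh_nbr i c d : i < t ->
    [&& e (g (i, d)) (h (i, c)), e z1 (h (i, c)) & e z2 (h (i, c))].
  by move=> /(gh_inc i c d) /andP[_]; rewrite inE.
have gh_e i c d : i < t -> e (g (i, d)) (h (i, c)).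
  by move=> /(gh_nbr i c d) /and3P[].
have zh_e i c : i < t -> e z1 (h (i, c)) && e z2 (h (i, c)).
  by move=> /(gh_nbr i c c) /and3P[_ -> ->].
have gxy_e i c : i < t -> e (g (i, c)) x && e (g (i, c)) y.
  by case/(g_common i c)/and3P=> _ -> ->.
have g_z p : p.1 < t -> (g p != z1) && (g p != z2).
  by case: p => i c /(g_common i c) /and3P[/R_z].
exists (theta_embedding z1 z2 x y g h); split.
  exact: (theta_embedding_inj z1x z2x z1y zh_e gxy_e col_e z12 xy g_z h_xy
                              g_inj h_inj).
exact: theta_embedding_edges.
Qed.

Lemma rich_c4_leq_codeg (T : finType) (e : rel T) (t : nat) (R : {set T}) (z1 z2 : T) :
  symmetric e -> bipartite e -> ~ has_copy (@theta3_2 t) e -> 0 < t -> z1 != z2 ->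
  (forall v, v \in R -> (v != z1) && (v != z2)) ->
  forall x y, x != y ->
  rich_c4 (centre_rel e z1 z2 R) (2 * t + 2) x y
    <= 4 * t * codeg (centre_rel e z1 z2 R) x y.
Proof.
move=> e_sym e_bip no_copy t_gt0 z12 R_z x y xy.
rewrite rich_c4_rich_pairs codeg_card leqNgt; apply/negP.
case/(k22_packing_of_rich_pairs x y (leqnn _)) => g [h packing].
by apply: no_copy; apply: theta_copy_of_k22_packing packing.
Qed.

Lemma card_cherry_triples (T : finType) (e : rel T) (z1 z2 : T) (R : {set T}) :
  irreflexive e ->
  #|[set p : T * T * T |
      [&& p.1.1 \in R,
          p.1.2 \in cnbr3 e p.1.1 z1 z2,
          p.2 \in cnbr3 e p.1.1 z1 z2,
          p.1.1 != p.1.2, p.1.1 != p.2 & p.1.2 != p.2]]|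
    = ncherries (centre_rel e z1 z2 R).
Proof.
move=> e_irr; rewrite cards_sum_mem /ncherries /cherries /codeg; symmetry.
under eq_bigr do under eq_bigr do rewrite big_distrr /=.
under eq_bigr do rewrite exchange_big /=.
rewrite exchange_big /= pair_bigA pair_bigA /=; apply: eq_bigr => [[[z x] y]] _ /=.
rewrite inE /= /centre_rel.
have [zR|] := boolP (z \in R); rewrite ?muln0 //=.
have [zx|] := boolP (x \in cnbr3 e z z1 z2); rewrite ?muln0 //=.
have [zy|] := boolP (y \in cnbr3 e z z1 z2); rewrite ?muln0 //=.
have cnbr3_neq v : v \in cnbr3 e z z1 z2 -> z != v.
  by rewrite inE => /and3P[zv _ _]; apply: contraTneq zv => <-; rewrite e_irr.
by rewrite (cnbr3_neq x zx) (cnbr3_neq y zy) muln1; case: (x != y).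
Qed.

Theorem mainTheorem6 :
  forall t : nat, 0 < t ->
  exists C : nat,
  forall (T : finType) (e : rel T),
    simple_graph e -> bipartite e -> ~ has_copy (@theta3_2 t) e ->
  forall z1 z2 : T, z1 != z2 ->
  let l := #|cnbr2 e z1 z2| in
  let R := [set v | [&& v != z1, v != z2 &
                       C ^ 2 * l <= #|cnbr3 e v z1 z2| ^ 2]] in
  #|[set p : T * T * T |
      [&& p.1.1 \in R,
          p.1.2 \in cnbr3 e p.1.1 z1 z2,
          p.2 \in cnbr3 e p.1.1 z1 z2,
          p.1.1 != p.1.2, p.1.1 != p.2 & p.1.2 != p.2]]|
    <= C * l ^ 2.
Proof.
move=> t t_gt0; exists (16 * t) => T e [e_sym e_irr] e_bip no_copy z1 z2 z12 /=.
set R := [set v | _].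
have R_z v : v \in R -> (v != z1) && (v != z2) by rewrite inE => /and3P[-> ->].
rewrite card_cherry_triples //.
apply: (ncherries_leq (m := 2 * t + 2) (k := 4 * t)).
- by move=> z v /andP[_]; rewrite !inE => /and3P[_ -> ->].
- move=> z v /andP[zR _].
  have -> : nbhd (centre_rel e z1 z2 R) z = cnbr3 e z z1 z2.
    by apply/setP => w; rewrite inE /centre_rel zR.
  by move: zR; rewrite inE => /and3P[].
- nia.
- lia.
- exact: rich_c4_leq_codeg.
Qed.
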